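(* Let $A$ be a nonempty set of positive integers, let $s\in A$ and let $n$ be a positive integer. Then $$\sum_{j\ge0}(-1)^jN^q_A(n-js)=N^q_{A\setminus\{s\}}(n)+\sum_{j\ge1}(-1)^{j-1}q_{A\setminus\{s\}}(n-js),$$ i.e. $N^q_A(n)-N^q_A(n-s)+N^q_A(n-2s)-\cdots=N^q_{A\setminus\{s\}}(n)+q_{A\setminus\{s\}}(n-s)-q_{A\setminus\{s\}}(n-2s)+\cdots$.
   Context: For a set $B$ of positive integers, $N^q_B(m)$ is the total number of parts, summed over all partitions of $m$ into pairwise distinct parts from $B$, and $q_B(m)$ is the number of such partitions. Conventions: $q_B(0)=1$, $N^q_B(0)=0$, $q_B(m)=N^q_B(m)=0$ for $m<0$. *)

From mathcomp Require Import all_boot all_order all_algebra.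
Set Implicit Arguments. Unset Strict Implicit. Unset Printing Implicit Defensive.
Import Order.TTheory GRing.Theory Num.Theory.

(* A partition of m into pairwise distinct parts from B is a finite set S of
   positive integers (all parts are <= m, so S : {set 'I_m.+1}) whose elements
   all lie in B and whose sum is m. *)
Definition distinct_parts (B : pred nat) (m : nat) : {set {set 'I_m.+1}} :=
  [set S : {set 'I_m.+1} |
     [forall i in S, (0 < (i : nat)) && B i] && ((\sum_(i in S) (i : nat)) == m)].

Definition qB (B : pred nat) (m : nat) : nat := #|distinct_parts B m|.

Definition NqB (B : pred nat) (m : nat) : nat :=
  \sum_(S in distinct_parts B m) #|S|.

Definition qZ (B : pred nat) (m : int) : int :=
  match m with Posz k => (qB B k)%:Z | Negz _ => 0%R end.
Definition NqZ (B : pred nat) (m : int) : int :=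
  match m with Posz k => (NqB B k)%:Z | Negz _ => 0%R end.

(* A partition of m into distinct parts from A either avoids s, and is then a
   partition over B = A \ {s}, or is s added to a partition of m - s over B,
   with one more part.  Hence N_A(m) = N_B(m) + N_B(m - s) + q_B(m - s) for
   every integer m, and in the alternating sum of N_A(n - js) the N_B terms
   telescope, leaving N_B(n) and the alternating sum of the q_B(n - js). *)

From mathcomp Require Import all_boot all_order all_algebra.
Import Order.TTheory GRing.Theory Num.Theory.
Set Implicit Arguments.
Unset Strict Implicit.
Unset Printing Implicit Defensive.

(* Parts bounded by N, so that partitions of different integers can be
   compared inside one type; [distinct_parts B m] is the case N = m. *)
Definition distinct_parts_upto (N : nat) (B : pred nat) (m : nat) :
    {set {set 'I_N.+1}} :=
  [set S : {set 'I_N.+1} |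
     [forall i in S, (0 < (i : nat)) && B i] &&
     ((\sum_(i in S) (i : nat)) == m)].

Lemma distinct_partsE B m : distinct_parts B m = distinct_parts_upto m B m.
Proof. by []. Qed.

Lemma distinct_parts_upto_le N B m (S : {set 'I_N.+1}) i :
  S \in distinct_parts_upto N B m -> i \in S -> i <= m.
Proof.
by rewrite inE => /andP[_ /eqP <-] iS; rewrite (bigD1 i) //= leq_addr.
Qed.

Section Widen.

Variables (M N : nat) (leMN : M.+1 <= N.+1) (B : pred nat) (m : nat).
Let widen := widen_ord leMN.

Lemma widen_ord_inj : injective widen.
Proof. by move=> i j /(congr1 val) ij; apply: val_inj. Qed.

Lemma widen_distinct_parts_upto (T : {set 'I_M.+1}) :
  (widen @: T \in distinct_parts_upto N B m) =
  (T \in distinct_parts_upto M B m).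
Proof.
rewrite !inE big_imset /=; last by move=> i j _ _; apply: widen_ord_inj.
congr andb; apply/forallP/forallP => allT i; apply/implyP => iT.
  by have := allT (widen i); rewrite imset_f.
by case/imsetP: iT => j jT ->; have := allT j; rewrite jT.
Qed.

Hypothesis le_mM : m <= M.

Lemma distinct_parts_upto_widen :
  distinct_parts_upto N B m =
  [set widen @: T | T : {set 'I_M.+1} in distinct_parts_upto M B m].
Proof.
apply/setP => S; apply/idP/imsetP => [SP | [T TP ->]]; last first.
  by rewrite widen_distinct_parts_upto.
have S_widen : S = widen @: (widen @^-1: S).
  apply/setP => i; apply/idP/imsetP => [iS | [j + ->]]; last by rewrite inE.
  have ltiM : i < M.+1.
    by rewrite ltnS (leq_trans (distinct_parts_upto_le SP iS)).
  have widen_i : widen (Ordinal ltiM) = i by apply: val_inj.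
  by exists (Ordinal ltiM); rewrite ?inE widen_i.
by exists (widen @^-1: S); rewrite // -widen_distinct_parts_upto -S_widen.
Qed.

Lemma sum_distinct_parts_upto_widen (F : nat -> nat) :
  \sum_(S in distinct_parts_upto M B m) F #|S| =
  \sum_(S in distinct_parts_upto N B m) F #|S|.
Proof.
rewrite distinct_parts_upto_widen big_imset /=; last first.
  by move=> T T' _ _; apply: (imset_inj widen_ord_inj).
by apply: eq_bigr => T _; rewrite card_imset //; apply: widen_ord_inj.
Qed.

End Widen.

Section Split.

Variables (N : nat) (A : pred nat) (s : 'I_N.+1).
Let B := [pred x | A x && (x != s)].

Lemma distinct_parts_upto_avoid m :
  [set S in distinct_parts_upto N A m | s \notin S] = distinct_parts_upto N B m.
Proof.
apply/setP => S; rewrite !inE; case: (boolP (s \in S)) => sS /=.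
  rewrite andbF; apply/esym/andP => -[/forallP/(_ s)].
  by rewrite sS /= eqxx !andbF.
rewrite andbT; congr andb; apply: eq_forallb_in => i iS.
by rewrite /= val_eqE (memPn sS) ?andbT.
Qed.

Lemma distinct_parts_upto_nmem (T : {set 'I_N.+1}) k :
  T \in distinct_parts_upto N B k -> s \notin T.
Proof. by rewrite -distinct_parts_upto_avoid inE => /andP[]. Qed.

Hypotheses (s_gt0 : 0 < s) (As : A s).

Lemma setU1_distinct_parts_upto (T : {set 'I_N.+1}) m : s \notin T ->
  (s |: T \in distinct_parts_upto N A m) =
  (s <= m) && (T \in distinct_parts_upto N A (m - s)).
Proof.
move=> sT; rewrite !inE big_setU1 //=.
have -> : [forall i in s |: T, (0 < (i : nat)) && A i] =
          [forall i in T, (0 < (i : nat)) && A i].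
  apply/forallP/forallP => allT i; apply/implyP => iT.
    by have := allT i; rewrite setU1r.
  case/setU1P: iT => [-> | iT]; first by rewrite s_gt0 As.
  by have := allT i; rewrite iT.
case: (leqP s m) => [le_sm | lt_ms] /=.
  by rewrite -(subnKC le_sm) eqn_add2l addKn.
apply/negbTE; rewrite negb_and; apply/orP; right.
by rewrite neq_ltn (leq_trans lt_ms) ?orbT ?leq_addr.
Qed.

Lemma distinct_parts_upto_contain m : s <= m ->
  [set S in distinct_parts_upto N A m | s \in S] =
  [set s |: T | T in distinct_parts_upto N B (m - s)].
Proof.
move=> le_sm; apply/setP => S; rewrite inE.
apply/andP/imsetP => [[SP sS] | [T TP ->]].
  exists (S :\ s); last by rewrite setD1K.
  rewrite -distinct_parts_upto_avoid inE setD11 andbT.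
  move: SP; rewrite -{1}(setD1K sS) setU1_distinct_parts_upto ?setD11 //.
  by case/andP.
have sT := distinct_parts_upto_nmem TP.
move: TP; rewrite -distinct_parts_upto_avoid inE sT andbT => TP.
by rewrite setU1_distinct_parts_upto // le_sm TP setU11.
Qed.

Lemma sum_distinct_parts_upto_split (F : nat -> nat) m :
  \sum_(S in distinct_parts_upto N A m) F #|S| =
  \sum_(S in distinct_parts_upto N B m) F #|S| +
  (if s <= m then \sum_(T in distinct_parts_upto N B (m - s)) F #|T|.+1 else 0).
Proof.
rewrite (bigID (fun S : {set 'I_N.+1} => s \in S)) /= addnC; congr addn.
  by rewrite -distinct_parts_upto_avoid; apply: eq_bigl => S; rewrite !inE.
case: leqP => [le_sm | lt_ms]; last first.
  rewrite big_pred0 // => S; apply/andP => -[SP sS].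
  by move: (distinct_parts_upto_le SP sS); rewrite leqNgt lt_ms.
rewrite (eq_bigl (mem [set S in distinct_parts_upto N A m | s \in S]));
  last by move=> S; rewrite !inE.
rewrite distinct_parts_upto_contain // big_imset /=.
  apply: eq_bigr => T TP.
  by rewrite cardsU1 (distinct_parts_upto_nmem TP).
move=> T T' /distinct_parts_upto_nmem sT /distinct_parts_upto_nmem sT'.
by move/(congr1 (fun S => S :\ s)); rewrite !setU1K.
Qed.

End Split.

Lemma NqB_split (A : pred nat) (s m : nat) : 0 < s -> A s ->
  let B := [pred x | A x && (x != s)] in
  NqB A m = NqB B m + (if s <= m then NqB B (m - s) + qB B (m - s) else 0).
Proof.
move=> s_gt0 As B; pose N := m + s.
have widen B' k F : k <= m ->
    \sum_(S in distinct_parts_upto k B' k) F #|S| =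
    \sum_(S in distinct_parts_upto N B' k) F #|S|.
  move=> le_km; apply: sum_distinct_parts_upto_widen => //.
  by rewrite ltnS (leq_trans le_km) ?leq_addr.
have lt_sN : s < N.+1 by rewrite ltnS leq_addl.
rewrite /qB -sum1_card /NqB !distinct_partsE.
rewrite (widen A m id) //.
rewrite (@sum_distinct_parts_upto_split _ A (Ordinal lt_sN) s_gt0 As id) /=.
rewrite (widen B m id) //; case: leqP => // le_sm.
rewrite (widen B _ id) ?leq_subr // (widen B _ (fun _ => 1)) ?leq_subr //.
by rewrite -big_split /=; congr addn; apply: eq_bigr => T _; rewrite addn1.
Qed.

Local Open Scope ring_scope.

Lemma NqZ_lt0 (B : pred nat) (m : int) : m < 0 -> NqZ B m = 0.
Proof. by case: m. Qed.

Lemma qZ_lt0 (B : pred nat) (m : int) : m < 0 -> qZ B m = 0.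
Proof. by case: m. Qed.

Lemma NqZ_split (A : pred nat) (s : nat) (m : int) : (0 < s)%N -> A s ->
  let B := [pred x | A x && (x != s)] in
  NqZ A m = NqZ B m + NqZ B (m - s%:Z) + qZ B (m - s%:Z).
Proof.
move=> s_gt0 As B; have [m_lt0 | m_ge0] := ltrP m 0.
  have ms_lt0 : m - s%:Z < 0 by rewrite subr_lt0 (lt_le_trans m_lt0).
  by rewrite !NqZ_lt0 ?qZ_lt0 ?addr0.
case: m m_ge0 => // k _; rewrite /= (NqB_split k s_gt0 As) -/B.
case: leqP => [le_sk | lt_ks].
  by rewrite subzn //= !PoszD addrA.
by rewrite NqZ_lt0 ?qZ_lt0 ?addn0 ?addr0 // subr_lt0 ltz_nat.
Qed.

Lemma alternating_sum_telescope (R : pzRingType) (a b c : nat -> R) (k : nat) :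
  (forall j, a j = b j + b j.+1 + c j.+1) ->
  \sum_(0 <= j < k) (-1) ^+ j * a j =
  b 0%N - (-1) ^+ k * b k + \sum_(1 <= j < k.+1) (-1) ^+ j.-1 * c j.
Proof.
move=> abc; pose f j := - ((-1) ^+ j * b j).
have step j : (-1) ^+ j * a j = (f j.+1 - f j) + (-1) ^+ j * c j.+1.
  by rewrite abc /f exprS mulN1r mulNr !opprK !mulrDr [_ * b j.+1 + _]addrC.
under eq_bigr do rewrite step.
rewrite big_split /= telescope_sumr // big_add1 /= /f opprK expr0 mul1r.
by rewrite [- _ + b _]addrC.
Qed.

Theorem theorem6 (A : pred nat) (s n : nat) :
  (forall a, A a -> (0 < a)%N) ->
  (exists a, A a) ->
  A s ->
  (0 < n)%N ->
  \sum_(0 <= j < n.+1) (-1) ^+ j * NqZ A (n%:Z - (j * s)%:Z)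
  = NqZ [pred x | A x && (x != s)] n%:Z
    + \sum_(1 <= j < n.+1) (-1) ^+ (j.-1) * qZ [pred x | A x && (x != s)] (n%:Z - (j * s)%:Z).
Proof.
(* Nonemptiness of A follows from [A s]; the identity also holds for n = 0. *)
move=> A_gt0 _ As _; have s_gt0 := A_gt0 s As.
set B := [pred x | A x && (x != s)].
pose b j := NqZ B (n%:Z - (j * s)%:Z).
pose c j := qZ B (n%:Z - (j * s)%:Z).
rewrite (@alternating_sum_telescope _ _ b c); last first.
  by move=> j; rewrite (NqZ_split _ s_gt0 As) /b /c mulSnr PoszD opprD addrA.
have past_n : n%:Z - (n.+1 * s)%:Z < 0 by rewrite subr_lt0 ltz_nat leq_pmulr.
rewrite big_nat_recr //= {2}/b {2}/c NqZ_lt0 // qZ_lt0 //.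
by rewrite /b mul0n subr0 mulr0 subr0 mulr0 addr0.
Qed.
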